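(* Let $d,t,m,L,N_1,\dots,N_L$ be natural numbers with $N_L=1$, let $\mathbf{N}=(N_L,N_{L-1},\dots,N_1,N_0=d)$, and let $\mathcal{W}=\{w^1,\dots,w^t\}\subset\mathbb{R}^d$. Suppose that (1) $t\geq 3m(N_1+1)(N_2+1)\cdots(N_L+1)$; (2) $w^1_1>w^2_1>\dots>w^t_1$ and $w^i_j=0$ for all $i$ and all $j=2,\dots,d$; (3) $f:\mathbb{R}^d\to\{0,1\}$ satisfies $f(w^i)\neq f(w^{i+1})$ for $i=1,\dots,t-1$. Then for any $\varphi\in\mathcal{NN}_{\mathbf{N},L}$ and any monotonic $g:\mathbb{R}\to\mathbb{R}$ there exists $\mathcal{U}\subset\mathcal{W}$ with $|\mathcal{U}|\geq m$ and $|g(\varphi(w))-f(w)|\geq 1/2$ for all $w\in\mathcal{U}$.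
   Context: $\mathcal{NN}_{\mathbf{N},L}$ is the set of maps $\varphi=W^L\rho W^{L-1}\rho\cdots\rho W^1:\mathbb{R}^d\to\mathbb{R}$ where each $W^\ell:\mathbb{R}^{N_{\ell-1}}\to\mathbb{R}^{N_\ell}$ is affine and $\rho(t)=\max\{0,t\}$ is applied coordinatewise. *)

From mathcomp Require Import all_boot all_order all_algebra.
From mathcomp Require Import reals.
Set Implicit Arguments. Unset Strict Implicit. Unset Printing Implicit Defensive.
Import Order.TTheory GRing.Theory Num.Theory.
Local Open Scope ring_scope.

Section NN.
Variable R : realType.

Definition relu (x : R) : R := Num.max x 0.

Definition Nd (d : nat) (N : nat -> nat) (l : nat) : nat :=
  if l is 0 then d else N l.

Variables (d : nat) (N : nat -> nat).
Variable W : forall l : nat, 'M[R]_(Nd d N l.+1, Nd d N l).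
Variable b : forall l : nat, 'cV[R]_(Nd d N l.+1).

Fixpoint hid (l : nat) : 'cV[R]_d -> 'cV[R]_(Nd d N l) :=
  match l return 'cV[R]_d -> 'cV[R]_(Nd d N l) with
  | 0 => fun x => x
  | l'.+1 => fun x => map_mx relu (W l' *m hid l' x + b l')
  end.

Definition net_out (L' : nat) (x : 'cV[R]_d) : 'cV[R]_(Nd d N L'.+1) :=
  W L' *m hid L' x + b L'.
End NN.

(* NN_{N,L} : maps R^d -> R realized by an L-layer ReLU network with widths
   N_0 = d, N_1, ..., N_L; the output in R^{N_L} (N_L = 1 in all uses) is
   identified with a real number by summing its (single) coordinate. *)
Definition NN (R : realType) (d : nat) (N : nat -> nat) (L : nat)
  : ('cV[R]_d -> R) -> Prop :=
  fun phi => exists L', L = L'.+1 /\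
    exists (W : forall l : nat, 'M[R]_(Nd d N l.+1, Nd d N l))
           (b : forall l : nat, 'cV[R]_(Nd d N l.+1)),
      forall x, phi x = \sum_(i < Nd d N L'.+1) (net_out W b L' x) i ord0.

Definition monotonic (R : realType) (g : R -> R) : Prop :=
  {homo g : x y / x <= y} \/ {homo g : x y / x <= y >-> y <= x}.

From mathcomp Require Import all_boot all_order all_algebra reals lra zify.
Import Order.TTheory GRing.Theory Num.Theory.
Local Open Scope ring_scope.

(* Order the points by their first coordinate x_n, the only nonzero one.
   Along them every neuron is a piecewise affine function of x_n.  A ReLU
   neuron fed by an affine combination h of the previous layer switches piece
   only where h changes sign, and h, being monotone on each piece, changes sign
   at most once per piece; so a layer of width N multiplies the number of
   pieces by at most N + 1, and phi has at most P = (N_1+1)...(N_(L-1)+1)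
   pieces.  On each piece g o phi is monotone, hence crosses 1/2 at most once.
   As f alternates between 0 and 1, between two consecutive points either
   g o phi misses f by at least 1/2 at one of them, or a piece boundary or a
   crossing of 1/2 lies in between.  There are fewer than 2P of the latter, so
   at least t/2 - 2P + 1 >= m points are missed, because t >= 6mP. *)

Lemma count_separated_le (S C : pred nat) n :
  (forall i j, (i < j)%N -> S i -> S j -> has C (index_iota i j)) ->
  (count S (iota 0 n) <= (count C (iota 0 n)).+1)%N.
Proof.
move=> sepSC.
(* An S point not yet followed by a C point accounts for the extra one. *)
suff [|[]//] : (count S (iota 0 n) <= count C (iota 0 n))%N \/
    (count S (iota 0 n) <= (count C (iota 0 n)).+1)%N /\
    exists2 s, (s < n)%N /\ S s & forall k, (s <= k < n)%N -> ~~ C k.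
  by move/leqW.
elim: n => [|n IHn]; first by left.
have noC_between s : (s < n)%N -> S s -> S n ->
    (forall k, (s <= k < n)%N -> ~~ C k) -> False.
  move=> sn Ss Sn noC; have /hasP[k] := sepSC s n sn Ss Sn.
  by rewrite mem_index_iota => /noC/negPf->.
rewrite -addn1 iotaD !count_cat /= add0n !addn0 !addn1.
case: IHn => [leSC | [leSC [s [sn Ss] noC]]].
- case: (boolP (S n)) => Sn; case: (boolP (C n)) => Cn /=;
    [left; lia| |left; lia|left; lia].
  right; split; first lia.
  by exists n => // k kn; have -> : k = n by lia.
- have Sn : S n = false by apply/negP => Sn; apply: (noC_between s).
  rewrite Sn; case: (boolP (C n)) => Cn /=; [left; lia|right; split; first lia].
  exists s; first by split=> //; lia.
  move=> k /andP[sk]; rewrite ltnS leq_eqVlt => /predU1P[->//|kn].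
  by rewrite noC ?sk.
Qed.

Lemma half_le_count_adjacent (P : pred nat) n :
  (forall k, (k.+1 < n)%N -> P k || P k.+1) -> (n./2 <= count P (iota 0 n))%N.
Proof.
move=> adjP.
have pairs k : (k.*2 <= n)%N -> (k <= count P (iota 0 k.*2))%N.
  elim: k => [//|k IHk] kn.
  rewrite doubleS -addn2 iotaD count_cat /= add0n.
  have := adjP k.*2; rewrite doubleS in kn.
  by case: (P k.*2) (P k.*2.+1) (IHk (ltnW (ltnW kn))) => -[]/=; lia.
rewrite -[in iota 0 n](odd_double_half n) addnC iotaD count_cat.
apply: leq_trans (pairs _ _) (leq_addr _ _).
by rewrite -[leqRHS](odd_double_half n) leq_addl.
Qed.

Lemma card_set_ord_count n (p : pred nat) :
  #|[set i : 'I_n | p i]| = count p (iota 0 n).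
Proof.
by rewrite -sum1dep_card -(big_mkord p (fun _ => 1%N)) sum1_count /index_iota subn0.
Qed.

Lemma count_exists_le_sum (I : finType) (P : I -> pred nat) s :
  (count (fun n => [exists k, P k n]) s <= \sum_(k : I) count (P k) s)%N.
Proof.
elim: s => [|n s IHs] /=; first by rewrite big1.
rewrite big_split leq_add //=.
by case: existsP => [[k Pkn]|//]; rewrite (bigD1 k) //= Pkn leq_addr.
Qed.

Section PiecewiseAffine.
Set Implicit Arguments.
Unset Strict Implicit.
Variable R : realType.

Definition monotonic_on (u : nat -> R) (D : pred nat) :=
  {in D &, forall k l, (k <= l)%N -> u k <= u l} \/
  {in D &, forall k l, (k <= l)%N -> u l <= u k}.

Lemma monotonic_on_comp (g : R -> R) u D :
  monotonic g -> monotonic_on u D -> monotonic_on (g \o u) D.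
Proof.
by case=> gm [] um; [left|right|right|left] => k l kD lD kl; apply/gm/um.
Qed.

Lemma lt_half_neq_of_near_bits (a b fa fb : R) :
  fa = 0 \/ fa = 1 -> fb = 0 \/ fb = 1 -> fa <> fb ->
  `|a - fa| < 1 / 2 -> `|b - fb| < 1 / 2 -> (a < 1 / 2) != (b < 1 / 2).
Proof.
rewrite !ltr_distl => fa01 fb01 fab.
have [[-> ->]|[-> ->]] : fa = 0 /\ fb = 1 \/ fa = 1 /\ fb = 0.
  by case: fa01 fb01 fab => -> [] -> fab;
    [exfalso; apply: fab|left|right|exfalso; apply: fab].
all: move=> /andP[? ?] /andP[? ?].
all: by case: (ltP a); case: (ltP b) => //= ? ?; exfalso; lra.
Qed.

Variables (t : nat) (x : nat -> R).
Hypothesis x_mono : monotonic_on x [pred k | (k < t)%N].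

Definition piecewise_affine (C : pred nat) (h : nat -> R) :=
  exists a c : nat -> R,
    (forall n, (n < t)%N -> h n = a n * x n + c n) /\
    (forall n, (n.+1 < t)%N -> ~~ C n -> a n = a n.+1 /\ c n = c n.+1).

Lemma piecewise_affine_eq C h h' : piecewise_affine C h ->
  (forall n, (n < t)%N -> h n = h' n) -> piecewise_affine C h'.
Proof.
by move=> [a [c [hE acC]]] hh'; exists a, c; split=> // n nt; rewrite -hh' ?hE.
Qed.

Lemma piecewise_affine_sub C C' h :
  subpred C C' -> piecewise_affine C h -> piecewise_affine C' h.
Proof.
move=> CC' [a [c [hE acC]]]; exists a, c; split=> // n nt nC'n.
by apply: acC => //; apply: contra nC'n; apply: CC'.
Qed.

Lemma piecewise_affine_cst C r : piecewise_affine C (fun=> r).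
Proof. by exists (fun=> 0), (fun=> r); split=> // n _; rewrite mul0r add0r. Qed.

Lemma piecewise_affine_id C : piecewise_affine C x.
Proof. by exists (fun=> 1), (fun=> 0); split=> // n _; rewrite mul1r addr0. Qed.

Lemma piecewise_affineD C h1 h2 :
  piecewise_affine C h1 -> piecewise_affine C h2 ->
  piecewise_affine C (fun n => h1 n + h2 n).
Proof.
move=> [a1 [c1 [h1E ac1C]]] [a2 [c2 [h2E ac2C]]].
exists (fun n => a1 n + a2 n), (fun n => c1 n + c2 n); split=> n nt.
  by rewrite h1E ?h2E // mulrDl addrACA.
by move=> nCn; have [-> ->] := ac1C n nt nCn; have [-> ->] := ac2C n nt nCn.
Qed.

Lemma piecewise_affineZ C h r :
  piecewise_affine C h -> piecewise_affine C (fun n => r * h n).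
Proof.
move=> [a [c [hE acC]]]; exists (fun n => r * a n), (fun n => r * c n).
split=> n nt; first by rewrite hE // mulrDr mulrA.
by move=> nCn; have [-> ->] := acC n nt nCn.
Qed.

Lemma piecewise_affine_sum C (I : Type) (s : seq I) (F : I -> nat -> R) :
  (forall i, piecewise_affine C (F i)) ->
  piecewise_affine C (fun n => \sum_(i <- s) F i n).
Proof.
move=> FC; elim: s => [|i s IHs].
  by apply: (piecewise_affine_eq (piecewise_affine_cst C 0)) => n _; rewrite big_nil.
apply: (piecewise_affine_eq (piecewise_affineD (FC i) IHs)) => n _.
by rewrite big_cons.
Qed.

Lemma piecewise_affine_monotonic_on C h i j :
  piecewise_affine C h -> (j < t)%N -> ~~ has C (index_iota i j) ->
  monotonic_on h [pred k | (i <= k <= j)%N].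
Proof.
move=> [a [c [hE acC]]] jt /hasPn noC.
set D := [pred k | (i <= k <= j)%N].
have ac_const : {in D &, forall k l, (k <= l)%N -> (a k, c k) = (a l, c l)}.
  apply: homo_leq_in => [//|? ? ? -> -> //|k l kD lD kml|k kD k1D].
    by move: kD lD; rewrite !inE; lia.
  move: kD k1D; rewrite !inE => kD k1D.
  have k1t : (k.+1 < t)%N by lia.
  have nCk : ~~ C k by apply: noC; rewrite mem_index_iota; lia.
  by have [-> ->] := acC k k1t nCk.
have hD k : k \in D -> h k = a i * x k + c i.
  move=> kD; have /andP[ik kj] := kD.
  have iD : i \in D by rewrite inE leqnn (leq_trans ik kj).
  case: (ac_const i k iD kD ik) => -> ->.
  by rewrite hE //; apply: leq_ltn_trans jt.
have DT : {subset D <= [pred k | (k < t)%N]}.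
  by move=> k /andP[_ kj]; rewrite inE (leq_ltn_trans kj).
case: x_mono => xm; case: (leP 0 (a i)) => ai; [left|right|right|left];
  move=> k l kD lD kl; rewrite !hD //; have := xm k l (DT _ kD) (DT _ lD) kl; nra.
Qed.

Definition crosses (th : R) (u : nat -> R) n :=
  (n.+1 < t)%N && ((u n < th) != (u n.+1 < th)).

Lemma monotonic_on_crosses_once th u i j :
  monotonic_on u [pred k | (i <= k <= j.+1)%N] -> (i < j)%N ->
  crosses th u i -> crosses th u j -> False.
Proof.
set D := [pred k | _]; move=> um ij /andP[_ ci] /andP[_ cj].
have [Di Di1 Dj Dj1] : [/\ i \in D, i.+1 \in D, j \in D & j.+1 \in D].
  by rewrite !inE; split; lia.
case: um => um; have := um _ _ Di Di1 (leqnSn i);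
  have := um _ _ Di1 Dj ij; have := um _ _ Dj Dj1 (leqnSn j);
  move: ci cj; case: (ltP (u i) th); case: (ltP (u i.+1) th);
  case: (ltP (u j) th); case: (ltP (u j.+1) th) => //= *; lra.
Qed.

Lemma count_crosses_le C th u :
  (forall i j, (j < t)%N -> ~~ has C (index_iota i j) ->
    monotonic_on u [pred k | (i <= k <= j)%N]) ->
  (count (predI (crosses th u) (predC C)) (iota 0 t)
    <= (count C (iota 0 t)).+1)%N.
Proof.
move=> umono; apply: count_separated_le => i j ij /andP[ci nCi] /andP[cj nCj].
apply: contraT => /hasPn noC; exfalso; apply: (monotonic_on_crosses_once _ ij ci cj).
apply: umono; first by case/andP: cj.
apply/hasPn => k; rewrite mem_index_iota => /andP[ik].
rewrite ltnS leq_eqVlt => /predU1P[->//|kj].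
by apply: noC; rewrite mem_index_iota ik.
Qed.

Lemma piecewise_affine_relu C h : piecewise_affine C h ->
  piecewise_affine (predU C (crosses 0 h)) (fun n => relu (h n)).
Proof.
move=> [a [c [hE acC]]].
exists (fun n => if h n < 0 then 0 else a n), (fun n => if h n < 0 then 0 else c n).
split=> n nt; first by rewrite /= /relu hE //; case: ltP => _; rewrite ?mul0r ?addr0.
rewrite inE negb_or /crosses nt => /andP[nCn /negPn/eqP sgn].
by rewrite -sgn; have [-> ->] := acC n nt nCn.
Qed.

Lemma piecewise_affine_affine_layer p q (M : 'M[R]_(q, p)) (b : 'cV[R]_q)
    C (y : nat -> 'cV[R]_p) :
  (forall j, piecewise_affine C (fun n => y n j ord0)) ->
  forall k, piecewise_affine C (fun n => (M *m y n + b) k ord0).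
Proof.
move=> yC k; apply: (piecewise_affine_eq (piecewise_affineD
  (piecewise_affine_sum (index_enum 'I_p) (fun j => piecewise_affineZ (M k j) (yC j)))
  (piecewise_affine_cst C (b k ord0)))) => n _.
by rewrite !mxE.
Qed.

Lemma piecewise_affine_relu_layer p q (M : 'M[R]_(q, p)) (b : 'cV[R]_q)
    C (y : nat -> 'cV[R]_p) :
  (forall j, piecewise_affine C (fun n => y n j ord0)) ->
  exists C', ((count C' (iota 0 t)).+1 <= (count C (iota 0 t)).+1 * q.+1)%N /\
    forall k, piecewise_affine C' (fun n => map_mx (@relu R) (M *m y n + b) k ord0).
Proof.
move=> yC; set z := fun k n => (M *m y n + b) k ord0.
have zC : forall k, piecewise_affine C (z k) := piecewise_affine_affine_layer M b yC.
set cr := fun k => predI (crosses 0 (z k)) (predC C).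
exists (predU C (fun n => [exists k, cr k n])); split.
  have crC k : (count (cr k) (iota 0 t) <= (count C (iota 0 t)).+1)%N.
    exact: count_crosses_le (fun i j => piecewise_affine_monotonic_on (zC k)).
  have := count_predUI C (fun n => [exists k, cr k n]) (iota 0 t).
  have := count_exists_le_sum _ cr (iota 0 t).
  have : (\sum_k count (cr k) (iota 0 t) <= \sum_(k < q) (count C (iota 0 t)).+1)%N.
    by apply: leq_sum => k _; exact: crC.
  rewrite sum_nat_const card_ord.
  nia.
move=> k; apply: (piecewise_affine_eq
  (piecewise_affine_sub _ (piecewise_affine_relu (zC k)))).
  move=> n /orP[Cn|crn]; first by rewrite inE Cn.
  case Cn: (C n); first by rewrite inE Cn.
  by rewrite inE; apply/orP; right; apply/existsP; exists k; rewrite /cr inE /= crn Cn.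
by move=> n _; rewrite mxE.
Qed.

Lemma piecewise_affine_hid d (N : nat -> nat)
    (W : forall l, 'M[R]_(Nd d N l.+1, Nd d N l)) (b : forall l, 'cV[R]_(Nd d N l.+1))
    (v : nat -> 'cV[R]_d) (hd : (0 < d)%N) :
  (forall n, v n (Ordinal hd) ord0 = x n) ->
  (forall n (j : 'I_d), (0 < j)%N -> v n j ord0 = 0) ->
  forall l, exists C,
    ((count C (iota 0 t)).+1 <= \prod_(1 <= j < l.+1) (N j).+1)%N /\
    forall k, piecewise_affine C (fun n => hid W b l (v n) k ord0).
Proof.
move=> vx v0; elim=> [|l [C [cC hidC]]].
  exists pred0; split; first by rewrite count_pred0 big_geq.
  move=> k /=; have [k0|kpos] := posnP k.
    have -> : k = Ordinal hd by apply: val_inj.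
    by apply: (piecewise_affine_eq (piecewise_affine_id _)) => n _; rewrite vx.
  by apply: (piecewise_affine_eq (piecewise_affine_cst _ 0)) => n _; rewrite v0.
have [C' [cC' hidC']] := piecewise_affine_relu_layer (W l) (b l) hidC.
exists C'; split=> //.
by rewrite big_nat_recr //=; apply: leq_trans cC' _; rewrite leq_mul2r cC orbT.
Qed.

Lemma piecewise_affine_NN d N L phi (v : nat -> 'cV[R]_d) (hd : (0 < d)%N) :
  NN N L phi ->
  (forall n, v n (Ordinal hd) ord0 = x n) ->
  (forall n (j : 'I_d), (0 < j)%N -> v n j ord0 = 0) ->
  exists C, ((count C (iota 0 t)).+1 <= \prod_(1 <= j < L) (N j).+1)%N /\
    piecewise_affine C (fun n => phi (v n)).
Proof.
move=> [L' [-> [W [b phiE]]]] vx v0.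
have [C [cC hidC]] := piecewise_affine_hid W b vx v0 L'.
exists C; split=> //; apply: (piecewise_affine_eq (piecewise_affine_sum _
  (piecewise_affine_affine_layer (W L') (b L') hidC))) => n _.
by rewrite phiE.
Qed.

Lemma count_far_from_alternating C h (g : R -> R) (F : nat -> R) :
  piecewise_affine C h -> monotonic g ->
  (forall n, F n = 0 \/ F n = 1) -> (forall n, (n.+1 < t)%N -> F n <> F n.+1) ->
  (t./2 <= count (fun n => 1 / 2 <= `|g (h n) - F n|)%R (iota 0 t)
            + (count C (iota 0 t)).*2.+1)%N.
Proof.
move=> hC gm F01 Falt.
pose err n := 1 / 2 <= `|g (h n) - F n|.
pose G := predI (crosses (1 / 2) (g \o h)) (predC C).
have cG : (count G (iota 0 t) <= (count C (iota 0 t)).+1)%N.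
  apply: count_crosses_le => i j jt noC.
  exact: monotonic_on_comp gm (piecewise_affine_monotonic_on hC jt noC).
have adj n : (n.+1 < t)%N -> predU err (predU C G) n || predU err (predU C G) n.+1.
  move=> nt /=; case: (boolP (err n)) => //= errn.
  case: (boolP (err n.+1)) => [|errn1]; first by rewrite !orbT.
  case: (boolP (C n)) => //= Cn; rewrite andbT /crosses nt /=.
  by rewrite (lt_half_neq_of_near_bits (F01 _) (F01 _) (Falt n nt)) // ltNge.
have := half_le_count_adjacent _ t adj.
have := count_predUI err (predU C G) (iota 0 t).
have := count_predUI C G (iota 0 t).
rewrite -/err; lia.
Qed.
End PiecewiseAffine.

Theorem lemma5p4 (R : realType) (d t m L : nat) (N : nat -> nat)
  (hd : (0 < d)%N) (hL : (0 < L)%N) (hNL : N L = 1%N)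
  (w : 'I_t -> 'cV[R]_d) (f : 'cV[R]_d -> R)
  (h1 : (3 * m * \prod_(1 <= l < L.+1) (N l).+1 <= t)%N)
  (h2a : forall i j : 'I_t, (i < j)%N -> w j (Ordinal hd) ord0 < w i (Ordinal hd) ord0)
  (h2b : forall (i : 'I_t) (j : 'I_d), (0 < j)%N -> w i j ord0 = 0)
  (h3f : forall x, f x = 0 \/ f x = 1)
  (h3 : forall i j : 'I_t, val j = (val i).+1 -> f (w i) <> f (w j)) :
  forall (phi : 'cV[R]_d -> R) (g : R -> R), NN N L phi -> monotonic g ->
  exists U : {set 'I_t}, (m <= #|U|)%N /\
    forall i, i \in U -> 1 / 2 <= `|g (phi (w i)) - f (w i)|.
Proof.
move=> phi g phiNN gm.
pose v n : 'cV[R]_d := if insub n is Some i then w i else 0.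
have vw (i : 'I_t) : v i = w i by rewrite /v valK.
pose x n := v n (Ordinal hd) ord0.
have x_mono : monotonic_on x [pred k | (k < t)%N].
  right=> k l kt lt; rewrite leq_eqVlt => /predU1P[->//|kl].
  by rewrite /x (vw (Ordinal kt)) (vw (Ordinal lt)); apply/ltW/h2a.
have v0 n (j : 'I_d) : (0 < j)%N -> v n j ord0 = 0.
  by rewrite /v; case: insubP => [i _ _|_] j0; rewrite ?h2b ?mxE.
have [C [cC phiC]] := piecewise_affine_NN x_mono phiNN (fun=> erefl) v0.
have f_alt n : (n.+1 < t)%N -> f (v n) <> f (v n.+1).
  by move=> nt; rewrite (vw (Ordinal (ltnW nt))) (vw (Ordinal nt)); exact: h3.
have := count_far_from_alternating x_mono phiC gm (fun n => h3f (v n)) f_alt.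
set err := fun n => _ <= _; move=> many_err.
exists [set i : 'I_t | err i]; split; last by move=> i; rewrite inE /err vw.
rewrite card_set_ord_count; move: h1; rewrite big_nat_recr //= hNL.
set P := \prod_(1 <= j < L) (N j).+1 in cC *.
have [->//|m_pos] := posnP m.
(* In terms of m * P, at least 3mP - 2P + 1 >= mP + 1 points are missed. *)
have := leq_pmulr m (leq_ltn_trans (leq0n _) cC).
have := leq_pmull P m_pos.
lia.
Qed.
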